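(* Let $T$ be a rooted edge-weighted full binary tree with $n$ leaves, all root-to-leaf paths of weight $1$, every edge of weight at least $\tau\frac{\log n}{\sqrt{n}}$ for a sufficiently large constant $\tau$, whose topology is known, with experiment outcomes on all triples of leaves generated by the homogeneous noise model. Let $P=(v_0=r,v_1,\dots,v_{\ell^\ast})$ be the rightmost root-to-leaf path and $f$ the largest index such that $v_f$ is heavy. Then there is a procedure (Reconstruct-right-path) which, with high probability, computes $h_{v_\ell}$ up to additive error $\pm\Theta(\sqrt{\log n/n})$ for every $\ell\le f$.
   Context: Distances $d$ between leaves are path weights. For each unordered triple of distinct leaves a single experiment $Q(a,b,c)$ returns one pair, independently across triples, with $\Pr[Q(a,b,c)=(a,b)]=\frac{d(a,c)+d(b,c)}{2(d(a,b)+d(b,c)+d(a,c))}$ (and symmetrically). For a vertex $v$, $h_v$ is the weight of a path from $v$ to any leaf below it; $\mathsf{NL}(v)$ is the number of leaves in the subtree rooted at $v$. Children of each internal vertex are ordered so that the right child $\mathsf{rc}$ and left child $\mathsf{lc}$ satisfy $\mathsf{NL}(\mathsf{rc})\ge\mathsf{NL}(\mathsf{lc})$; the rightmost path starts at the root and always goes to the right child. A vertex $v$ is heavy if $\mathsf{NL}(v)\ge\alpha n+1$ with $\alpha=\frac16$. ''With high probability'' means probability $1-o(1)$ as $n\to\infty$. *)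

From HB Require Import structures.
From mathcomp Require Import all_boot all_order all_algebra.
From mathcomp Require Import all_classical all_reals all_analysis.
Set Implicit Arguments. Unset Strict Implicit. Unset Printing Implicit Defensive.
Import Order.TTheory GRing.Theory Num.Theory.
Local Open Scope ring_scope.

(* Tree topology (what the procedure is given): full binary tree, leaves labelled by nat.
   In [BNode l r], [l] is the left child and [r] the right child. *)
Inductive btree := BLeaf of nat | BNode of btree & btree.

(* Edge-weighted full binary tree: [WNode wl l wr r] has left child [l] reached by an
   edge of weight [wl] and right child [r] reached by an edge of weight [wr]. *)
Inductive wtree (R : Type) :=
  | WLeaf of nat
  | WNode of R & wtree R & R & wtree R.
Arguments WLeaf {R}.

Section Trees.
Variable R : realType.

Fixpoint topo (t : wtree R) : btree :=
  match t with
  | WLeaf a => BLeaf a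
  | WNode _ l _ r => BNode (topo l) (topo r)
  end.

Fixpoint leaves (t : wtree R) : seq nat :=
  match t with
  | WLeaf a => [:: a]
  | WNode _ l _ r => leaves l ++ leaves r
  end.

Definition NL (t : wtree R) : nat := size (leaves t).

Fixpoint rootdists (t : wtree R) : seq R :=
  match t with
  | WLeaf _ => [:: 0]
  | WNode wl l wr r => map (fun x => wl + x) (rootdists l) ++ map (fun x => wr + x) (rootdists r)
  end.

Fixpoint edges_ge (t : wtree R) (w0 : R) : bool :=
  match t with
  | WLeaf _ => true
  | WNode wl l wr r => [&& w0 <= wl, w0 <= wr, edges_ge l w0 & edges_ge r w0]
  end.

Fixpoint ordered (t : wtree R) : bool :=
  match t with
  | WLeaf _ => true
  | WNode _ l _ r => [&& (NL l <= NL r)%N, ordered l & ordered r]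
  end.

Fixpoint rd (t : wtree R) (a : nat) : R :=
  match t with
  | WLeaf _ => 0
  | WNode wl l wr r => if a \in leaves l then wl + rd l a else wr + rd r a
  end.

Fixpoint dist (t : wtree R) (a b : nat) : R :=
  match t with
  | WLeaf _ => 0
  | WNode _ l _ r =>
      if (a \in leaves l) && (b \in leaves l) then dist l a b
      else if (a \in leaves r) && (b \in leaves r) then dist r a b
      else rd t a + rd t b
  end.

(* h_v: weight of a path from v to a leaf below it (here: the first leaf;
   under the ultrametric hypothesis all such paths have the same weight) *)
Definition hv (t : wtree R) : R := head 0 (rootdists t).

(* the rightmost root-to-leaf path v_0 = root, v_1, ..., as a list of subtrees *)
Fixpoint rpath (t : wtree R) : seq (wtree R) :=
  match t with
  | WLeaf _ => [:: t]
  | WNode _ _ _ r => t :: rpath r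
  end.

Definition alpha_heavy : R := 1 / 6.

Definition heavy (n : nat) (v : wtree R) : bool := alpha_heavy * n%:R + 1 <= (NL v)%:R.

Definition fidx (n : nat) (t : wtree R) : nat :=
  \max_(i < size (rpath t) | heavy n (nth t (rpath t) i)) i.

Definition leaf_set_ok (n : nat) (t : wtree R) : Prop := perm_eq (leaves t) (iota 0 n).

End Trees.

(* unordered triples of distinct leaves, represented as a < b < c *)
Definition triple (n : nat) :=
  {x : 'I_n * 'I_n * 'I_n | (x.1.1 < x.1.2)%N && (x.1.2 < x.2)%N}.

(* outcome of experiment Q(a,b,c) (a<b<c): 0 = pair (a,b), 1 = pair (a,c), 2 = pair (b,c) *)
Definition outcomes (n : nat) := {ffun triple n -> 'I_3}.

Definition qprob (R : realType) (n : nat) (t : wtree R) (x : triple n) (k : 'I_3) : R :=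
  let a := val (val x).1.1 in let b := val (val x).1.2 in let c := val (val x).2 in
  let S := dist t a b + dist t b c + dist t a c in
  if val k == 0%N then (dist t a c + dist t b c) / (2 * S)
  else if val k == 1%N then (dist t a b + dist t b c) / (2 * S)
  else (dist t a b + dist t a c) / (2 * S).

(* probability (over independent outcomes of all triples) of an event E *)
Definition Prob (R : realType) (n : nat) (t : wtree R) (E : outcomes n -> bool) : R :=
  \sum_(o : outcomes n) (\prod_(x : triple n) qprob t x (o x)) * (E o)%:R.

(* Fix a vertex v = v_l (l > 0) of the rightmost path, with children lc and rc,
   and colour the leaves 0 (below the left child of the root), 1 (below lc) and
   2 (below rc).  As every leaf is at height 1, leaves of colour 0 are at
   distance 2 from all leaves below v, while leaves of colours 1 and 2 are at
   distance 2 h_v.  So on a triple with one leaf of each colour, the experiment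
   returns the pair of colours {1, 2} with probability exactly 1/(h_v + 2), and
   h_v is estimated by 1/p - 2, p being the observed frequency of that outcome.
   When l <= f, the ordering of children makes rc contain at least n/12 leaves,
   so there are at least n/12 such triples; by Hoeffding's inequality p is within
   t = 14 sqrt(ln n / n) of 1/(h_v + 2) except with probability
   2 exp(-n t^2 / 96) <= 2/n^2, which gives |1/p - 2 - h_v| <= 18 t.  A union
   bound over the at most n vertices of the path concludes.  The lower bound on
   the edge weights is only needed to make the noise model a probability
   distribution (distinct leaves are at positive distance), so tau = 1. *)

From HB Require Import structures.
From mathcomp Require Import all_boot all_order all_algebra.
From mathcomp Require Import all_classical all_reals all_analysis.
From mathcomp Require Import ring lra zify.
Import Order.TTheory GRing.Theory Num.Theory.
Local Open Scope ring_scope.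

Set Implicit Arguments. Unset Strict Implicit.

Lemma expR_le_quad (R : realType) (y : R) : `|y| <= 1/2 -> expR y <= 1 + y + 2 * y ^+ 2.
Proof.
rewrite ler_norml => /andP[yl yr].
have e0 : 0 < expR y := expR_gt0 y.
have : expR y * (1 - y) <= 1.
  by have := expR_ge1Dx (- y); have := expRxMexpNx_1 y; nra.
nra.
Qed.

Lemma ln_le_2sqrt (R : realType) (x : R) : 1 <= x -> ln x <= 2 * Num.sqrt x.
Proof.
move=> x1; have s0 : 0 < Num.sqrt x by rewrite sqrtr_gt0; lra.
have -> : x = Num.sqrt x ^+ 2 by rewrite sqr_sqrtr //; lra.
rewrite lnXn // sqrtr_sqr ger0_norm; last exact: ltW.
have := @le_ln1Dx R (Num.sqrt x - 1); rewrite subrKC mulr2n; lra.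
Qed.

Lemma inv_sub2_near (R : realType) (p q h t : R) :
  p * (h + 2) = 1 -> 0 <= h <= 1 -> `|q - p| < t -> t <= 1/6 ->
  `|q^-1 - 2 - h| <= 18 * t.
Proof.
move=> hp /andP[h0 h1] + t6; rewrite ltr_norml => /andP[qp1 qp2].
have q6 : 1/6 <= q by nra.
have qV : q * q^-1 = 1 by rewrite mulfV // gt_eqF //; lra.
have qV0 : 0 < q^-1 by rewrite invr_gt0; lra.
have qV6 : q^-1 <= 6 by nra.
have -> : q^-1 - 2 - h = q^-1 * (h + 2) * (p - q).
  have e : q^-1 * (h + 2) * (p - q) = q^-1 * (p * (h + 2)) - q * q^-1 * (h + 2) by ring.
  by rewrite e hp qV; ring.
rewrite normrM ger0_norm; last by apply: mulr_ge0; lra.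
have : `|p - q| < t by rewrite distrC ltr_norml; lra.
have a18 : q^-1 * (h + 2) <= 18 by nra.
have := normr_ge0 (p - q); nra.
Qed.

Section ProductMeasure.
Variables (R : realType) (I K : finType) (q : I -> K -> R).
Hypothesis q_ge0 : forall x k, 0 <= q x k.
Hypothesis q_sum1 : forall x, \sum_k q x k = 1.

Definition pweight (o : {ffun I -> K}) : R := \prod_x q x (o x).

Definition pr (E : pred {ffun I -> K}) : R := \sum_o pweight o * (E o)%:R.

Lemma pweight_ge0 o : 0 <= pweight o.
Proof. exact: prodr_ge0. Qed.

Lemma sum_pweightM (F : I -> K -> R) :
  \sum_o pweight o * \prod_x F x (o x) = \prod_x \sum_k q x k * F x k.
Proof. by rewrite bigA_distr_bigA; apply: eq_bigr => o _; rewrite -big_split. Qed.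

Lemma sum_pweight : \sum_o pweight o = 1.
Proof. by rewrite /pweight -bigA_distr_bigA big1. Qed.

Lemma pr_union_bound (J : finType) (B : J -> pred {ffun I -> K}) (E : pred {ffun I -> K}) (b : R) :
  (forall o, ~~ E o -> exists j, B j o) -> (forall j, pr (B j) <= b) ->
  1 - #|J|%:R * b <= pr E.
Proof.
move=> cover prB.
have pointwise o : 1 - \sum_j (B j o)%:R <= (E o)%:R :> R.
  case Eo: (E o); first by rewrite lerBlDr lerDl sumr_ge0.
  have [j Bj] := cover o (negbT Eo).
  by rewrite subr_le0 (bigD1 j) //= Bj lerDl sumr_ge0.
apply: le_trans (_ : \sum_o pweight o * (1 - \sum_j (B j o)%:R) <= _); last first.
  by apply: ler_sum => o _; apply: ler_wpM2l; [exact: pweight_ge0 | exact: pointwise].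
under eq_bigr do rewrite mulrBr mulr1 mulr_sumr.
rewrite sumrB sum_pweight exchange_big lerD2l lerN2 -sum1_card natr_sum mulr_suml.
by apply: ler_sum => j _; rewrite mul1r; exact: prB.
Qed.

Lemma mgf_le_expR (x : I) (Y : K -> R) (lam : R) :
  (forall k, `|Y k| <= 1) -> \sum_k q x k * Y k = 0 -> 0 <= lam <= 1/2 ->
  \sum_k q x k * expR (lam * Y k) <= expR (2 * lam ^+ 2).
Proof.
move=> Y1 Y0 /andP[lam0 lam2].
have Y2 k : Y k ^+ 2 <= 1 by rewrite -real_normK ?num_real // exprn_ile1.
apply: le_trans (expR_ge1Dx _).
apply: (@le_trans _ _ (\sum_k (q x k + lam * (q x k * Y k) + 2 * lam ^+ 2 * (q x k * Y k ^+ 2)))).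
  apply: ler_sum => k _.
  have -> : q x k + lam * (q x k * Y k) + 2 * lam ^+ 2 * (q x k * Y k ^+ 2)
          = q x k * (1 + lam * Y k + 2 * (lam * Y k) ^+ 2) by ring.
  apply: ler_wpM2l => //; apply: expR_le_quad.
  by rewrite normrM ger0_norm //; have := Y1 k; have := normr_ge0 (Y k); nra.
rewrite !big_split /= -!mulr_sumr q_sum1 Y0 mulr0 addr0 lerD2l.
rewrite -[leRHS]mulr1 ler_wpM2l ?mulr_ge0 ?sqr_ge0 //.
by rewrite -(q_sum1 x) ler_sum // => k _; rewrite -[leRHS]mulr1 ler_wpM2l.
Qed.

Lemma hoeffding_upper (S : pred I) (Y : I -> K -> R) (t : R) :
  (forall x k, `|Y x k| <= 1) -> (forall x, S x -> \sum_k q x k * Y x k = 0) -> 0 < t <= 2 ->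
  pr (fun o => #|S|%:R * t <= \sum_(x | S x) Y x (o x)) <= expR (- (#|S|%:R * t ^+ 2 / 8)).
Proof.
move=> Y1 Y0 /andP[t0 t2]; set m := #|S|%:R; set lam := t / 4.
have lam_bd : 0 <= lam <= 1/2 by rewrite /lam; apply/andP; split; lra.
have /andP[lam0 _] := lam_bd.
pose F x k := if S x then expR (lam * Y x k) else 1.
have markov o : (m * t <= \sum_(x | S x) Y x (o x))%R%:R
    <= expR (- (lam * m * t)) * \prod_x F x (o x).
  have -> : \prod_x F x (o x) = expR (\sum_(x | S x) lam * Y x (o x)).
    by rewrite expR_sum -big_mkcond.
  rewrite -expRD -mulr_sumr.
  have [dev|_] := boolP (m * t <= \sum_(x | S x) Y x (o x)); last by rewrite expR_ge0.
  by apply: le_trans (expR_ge1Dx _); rewrite lerDl; nra.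
have mgf x : \sum_k q x k * F x k <= if S x then expR (2 * lam ^+ 2) else 1.
  rewrite /F; case Sx: (S x); last by under eq_bigr do rewrite mulr1; rewrite q_sum1.
  exact: mgf_le_expR (Y0 x Sx) lam_bd.
apply: le_trans (_ : \sum_o pweight o * (expR (- (lam * m * t)) * \prod_x F x (o x)) <= _).
  by apply: ler_sum => o _; apply: ler_wpM2l; [exact: pweight_ge0 | exact: markov].
rewrite (eq_bigr _ (fun o _ => mulrCA _ _ _)) -mulr_sumr sum_pweightM.
apply: le_trans (_ : expR (- (lam * m * t)) * \prod_(x | S x) expR (2 * lam ^+ 2) <= _).
  rewrite [X in _ <= _ * X]big_mkcond ler_wpM2l ?expR_ge0 // ler_prod // => x _.
  by rewrite mgf andbT sumr_ge0 // => k _; rewrite mulr_ge0 // /F; case: (S x); rewrite ?expR_ge0.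
rewrite prodr_const -expRM_natl -expRD ler_expR /lam /m; lra.
Qed.

Lemma hoeffding (S : pred I) (Y : I -> K -> R) (t : R) :
  (forall x k, `|Y x k| <= 1) -> (forall x, S x -> \sum_k q x k * Y x k = 0) -> 0 < t <= 2 ->
  pr (fun o => #|S|%:R * t <= `|\sum_(x | S x) Y x (o x)|) <= 2 * expR (- (#|S|%:R * t ^+ 2 / 8)).
Proof.
move=> Y1 Y0 t02.
have NY1 x k : `|- Y x k| <= 1 by rewrite normrN.
have NY0 x : S x -> \sum_k q x k * - Y x k = 0.
  by move=> Sx; under eq_bigr do rewrite mulrN; rewrite sumrN Y0 ?oppr0.
set E := expR _; apply: (@le_trans _ _ (E + E)); last by rewrite mulrDl mul1r.
apply: le_trans (lerD (hoeffding_upper Y1 Y0 t02) (hoeffding_upper NY1 NY0 t02)).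
rewrite /pr -big_split /=; apply: ler_sum => o _; rewrite -mulrDr ler_wpM2l ?pweight_ge0 //.
rewrite ler_normr sumrN; set s := \sum_(x | S x) _.
by case: (_ <= s)%R; case: (_ <= - s)%R; rewrite /= ?addr0 ?add0r ?lerDl ?ler01.
Qed.
End ProductMeasure.

Section WeightedTrees.
Variable R : realType.
Implicit Types (t : wtree R) (c : R).

Definition const_height t c : bool := all (fun x => x == c) (rootdists t).

Lemma NL_node (wl wr : R) l r : NL (WNode wl l wr r) = (NL l + NL r)%N.
Proof. by rewrite /NL /= size_cat. Qed.

Lemma NL_gt0 t : (0 < NL t)%N.
Proof. by elim: t => // wl l IHl wr r _; rewrite NL_node ltn_addr. Qed.

Lemma exists_leaf t : exists a, a \in leaves t.
Proof. by elim: t => [a|wl l [a al] wr r _]; exists a; rewrite //= ?mem_cat ?al ?inE. Qed.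

Lemma size_rootdists t : size (rootdists t) = NL t.
Proof. by elim: t => //= wl l IHl wr r IHr; rewrite NL_node size_cat !size_map IHl IHr. Qed.

Lemma const_height_node (wl wr : R) l r c : const_height (WNode wl l wr r) c ->
  const_height l (c - wl) /\ const_height r (c - wr).
Proof.
rewrite /const_height /= all_cat !all_map => /andP[/allP hl /allP hr].
by split; apply/allP => x hx; [move/eqP: (hl x hx) | move/eqP: (hr x hx)] => /= <-; rewrite addrC addKr.
Qed.

Lemma hv_const t c : const_height t c -> hv t = c.
Proof.
rewrite /hv /const_height; case E: (rootdists t) => [|x s] /=; last by case/andP=> /eqP.
by have := NL_gt0 t; rewrite -size_rootdists E.
Qed.

Lemma rd_const t c a : const_height t c -> a \in leaves t -> rd t a = c.
Proof.
elim: t c => [b|wl l IHl wr r IHr] c /=; first by rewrite /const_height /= andbT => /eqP.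
move=> /const_height_node[hl hr]; rewrite mem_cat.
by case: ifP => [al _|_ /= ar]; [rewrite (IHl _ hl al) | rewrite (IHr _ hr ar)]; rewrite addrC subrK.
Qed.

Lemma rd_ge0 t (w0 : R) a : 0 <= w0 -> edges_ge t w0 -> 0 <= rd t a.
Proof.
move=> w00; elim: t => //= wl l IHl wr r IHr /and4P[wlw wrw el er].
by case: ifP => _; apply: addr_ge0; [exact: le_trans wlw | exact: IHl | exact: le_trans wrw | exact: IHr].
Qed.

Lemma dist_sym t a b : dist t a b = dist t b a.
Proof. by elim: t => //= wl l -> wr r ->; rewrite andbC (andbC (a \in leaves r)) addrC. Qed.

Lemma dist_ge0 t (w0 : R) a b : 0 <= w0 -> edges_ge t w0 -> 0 <= dist t a b.
Proof.
move=> w00; elim: t => // wl l IHl wr r IHr et; have /and4P[_ _ el er] := et; rewrite /=.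
case: ifP => _; first exact: IHl.
case: ifP => _; first exact: IHr.
by rewrite addr_ge0 // (rd_ge0 _ w00 et).
Qed.

Lemma dist_gt0 t (w0 : R) a b : 0 < w0 -> edges_ge t w0 -> uniq (leaves t) ->
  a \in leaves t -> b \in leaves t -> a != b -> 0 < dist t a b.
Proof.
move=> w00; elim: t => [c|wl l IHl wr r IHr].
  by move=> _ _; rewrite !inE => /eqP-> /eqP->; rewrite eqxx.
move=> et; have /and4P[wlw wrw el er] := et; rewrite /=.
rewrite cat_uniq !mem_cat => /and3P[ul /hasPn lr ur] ha hb ab.
case: ifP => [/andP[al bl]|_]; first exact: IHl.
case: ifP => [/andP[ar br]|_]; first exact: IHr.
apply: ltr_pwDl; last exact: (rd_ge0 _ (ltW w00) et).
case: ifP => _; apply: ltr_pwDl; rewrite ?(lt_le_trans w00) ?(rd_ge0 _ (ltW w00)) //.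
Qed.

Lemma rpath_inv (P : wtree R -> Prop) :
  (forall wl l wr r, P (WNode wl l wr r) -> P r) ->
  forall t d j, P d -> P t -> P (nth d (rpath t) j).
Proof.
move=> step; elim=> [a|wl l _ wr r IHr] d [|j] Pd Pt //=; first by rewrite nth_nil.
exact: IHr Pd (step _ _ _ _ Pt).
Qed.

Lemma leaves_rpath t j : {subset leaves (nth t (rpath t) j) <= leaves t}.
Proof.
apply: (rpath_inv (P := fun v => {subset leaves v <= leaves t})) => //.
by move=> wl l wr r sub x xr; apply: sub; rewrite /= mem_cat xr orbT.
Qed.

Lemma uniq_rpath t j : uniq (leaves t) -> uniq (leaves (nth t (rpath t) j)).
Proof.
by move=> ut; apply: (rpath_inv (P := fun v => uniq (leaves v))) => // wl l wr r; rewrite /= cat_uniq => /and3P[].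
Qed.

Lemma ordered_rpath t j : ordered t -> ordered (nth t (rpath t) j).
Proof. by move=> ot; apply: (rpath_inv (P := @ordered R)) => // wl l wr r /and3P[]. Qed.

Lemma edges_ge_rpath t (w0 : R) j : edges_ge t w0 -> edges_ge (nth t (rpath t) j) w0.
Proof. by move=> et; apply: (rpath_inv (P := fun v => edges_ge v w0)) => // wl l wr r /and4P[]. Qed.

Lemma const_height_rpath t (w0 c : R) j : 0 <= w0 -> edges_ge t w0 -> const_height t c ->
  exists2 c', const_height (nth t (rpath t) j) c' & c' <= c.
Proof.
move=> w00 et ct.
pose P v := edges_ge v w0 /\ exists2 c', const_height v c' & c' <= c.
have Pt : P t by split=> //; exists c.
suff [] : P (nth t (rpath t) j) by [].
apply: (rpath_inv (P := P) _ j Pt Pt) => wl l wr r [/and4P[_ wrw _ er] [c' /const_height_node[_ cr] c'c]].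
by split=> //; exists (c' - wr) => //; have := le_trans w00 wrw; lra.
Qed.

Lemma NL_rpath_mono t i j : (i <= j < size (rpath t))%N ->
  (NL (nth t (rpath t) j) <= NL (nth t (rpath t) i))%N.
Proof.
elim: t i j => [a|wl l _ wr r IHr] [|i] [|j] //=; rewrite ?ltnS //.
- by rewrite ltn0 andbF.
- move=> jr; rewrite (set_nth_default r) //.
  apply: leq_trans (_ : NL r <= _)%N; last by rewrite NL_node leq_addl.
  by have := IHr 0%N j jr; case: (r).
- by move=> /andP[ij jr]; rewrite !(set_nth_default r) ?(IHr i) ?ij //; apply: leq_ltn_trans jr.
Qed.

Lemma size_rpath_le t : (size (rpath t) <= NL t)%N.
Proof. by elim: t => //= wl l _ wr r IHr; rewrite NL_node -add1n leq_add ?NL_gt0. Qed.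

Lemma dist_rpath t j a b : uniq (leaves t) ->
  a \in leaves (nth t (rpath t) j) -> b \in leaves (nth t (rpath t) j) ->
  dist t a b = dist (nth t (rpath t) j) a b.
Proof.
move=> ut.
pose P v := uniq (leaves v) /\ {in leaves v &, forall x y, dist t x y = dist v x y}.
have Pt : P t by [].
suff [_] : P (nth t (rpath t) j) by apply.
apply: (rpath_inv (P := P) _ j Pt Pt) => wl l wr r [].
rewrite /= cat_uniq => /and3P[_ /hasPn lr ur] dt; split=> // x y xr yr.
by rewrite dt ?mem_cat ?xr ?yr ?orbT //= (negbTE (lr x xr)).
Qed.

Lemma dist_node_split (wl wr : R) l r c a b : uniq (leaves (WNode wl l wr r)) ->
  const_height (WNode wl l wr r) c -> a \in leaves l -> b \in leaves r ->
  dist (WNode wl l wr r) a b = 2 * c.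
Proof.
move=> u ct al br; have := u; rewrite /= cat_uniq => /and3P[_ /hasPn lr _].
have ar : a \notin leaves r by apply: contraL al; exact: lr.
have [cl cr] := const_height_node ct.
rewrite /= al (negbTE (lr b br)) (negbTE ar) /= (rd_const cl al) (rd_const cr br); ring.
Qed.
End WeightedTrees.

Lemma qprob_ge0 (R : realType) n (t : wtree R) (w0 : R) (x : triple n) k :
  0 <= w0 -> edges_ge t w0 -> 0 <= qprob t x k.
Proof.
move=> w00 et; have d0 a b := dist_ge0 a b w00 et.
by rewrite /qprob; case: ifP => _; [|case: ifP => _]; rewrite divr_ge0 ?mulr_ge0 ?addr_ge0.
Qed.

Lemma qprob_sum1 (R : realType) n (t : wtree R) (w0 : R) (x : triple n) :
  0 < w0 -> edges_ge t w0 -> leaf_set_ok n t -> \sum_k qprob t x k = 1.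
Proof.
move=> w00 et lok; have d0 a b := dist_ge0 a b (ltW w00) et.
have mem (z : 'I_n) : val z \in leaves t by rewrite (perm_mem lok) mem_iota /=.
case: x => [[[a b] c] abc]; have /andP[ab _] := abc.
have dab : 0 < dist t a b.
  by apply: dist_gt0 et _ (mem a) (mem b) _; rewrite ?(perm_uniq lok) ?iota_uniq // neq_ltn ab.
rewrite !big_ord_recl big_ord0 /qprob /=.
field; rewrite gt_eqF //; have := d0 b c; have := d0 a c; lra.
Qed.

Fixpoint bleaves (b : btree) : seq nat :=
  match b with BLeaf a => [:: a] | BNode l r => bleaves l ++ bleaves r end.

Fixpoint brpath (b : btree) : seq btree :=
  match b with BLeaf _ => [:: b] | BNode _ r => b :: brpath r end.

Definition bleft (b : btree) : btree := if b is BNode l _ then l else b.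

Definition bright (b : btree) : btree := if b is BNode _ r then r else b.

Lemma bleaves_topo (R : realType) (t : wtree R) : bleaves (topo t) = leaves t.
Proof. by elim: t => //= wl l -> wr r ->. Qed.

Lemma brpath_topo (R : realType) (t : wtree R) : brpath (topo t) = map (@topo R) (rpath t).
Proof. by elim: t => //= wl l _ wr r ->. Qed.

Definition spine_class (bt : btree) (l a : nat) : nat :=
  let v := nth bt (brpath bt) l in
  if a \in bleaves (bleft bt) then 0%N
  else if a \in bleaves (bleft v) then 1%N
  else if a \in bleaves (bright v) then 2%N else 3%N.

Definition triple_leaves n (x : triple n) : seq nat :=
  [:: val (val x).1.1; val (val x).1.2; val (val x).2].

Definition rainbow n (cl : nat -> nat) (x : triple n) : bool :=
  perm_eq (map cl (triple_leaves x)) [:: 0; 1; 2]%N.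

Definition excluded n (x : triple n) (k : 'I_3) : nat :=
  if val k == 0%N then val (val x).2 else if val k == 1%N then val (val x).1.2 else val (val x).1.1.

Definition excludes_root n (bt : btree) (l : nat) (x : triple n) (k : 'I_3) : bool :=
  spine_class bt l (excluded x k) == 0%N.

Definition pair_freq (R : realType) n (bt : btree) (o : outcomes n) (l : nat) : R :=
  (\sum_(x | rainbow (spine_class bt l) x) ((excludes_root bt l x (o x))%:R : R))
  / #|rainbow (n := n) (spine_class bt l)|%:R.

Definition height_estimate (R : realType) n (bt : btree) (o : outcomes n) (l : nat) : R :=
  if l == 0%N then 1 else (pair_freq R bt o l)^-1 - 2.

Lemma exists_triple n u v w : (u < n)%N -> (v < n)%N -> (w < n)%N -> uniq [:: u; v; w] ->
  exists x : triple n, perm_eq (triple_leaves x) [:: u; v; w].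
Proof.
move=> un vn wn U; set s := [:: u; v; w].
have ps : perm_eq (sort leq s) s by rewrite perm_sort.
have : sorted ltn (sort leq s).
  by rewrite ltn_sorted_uniq_leq (perm_uniq ps) U sort_sorted //; exact: leq_total.
have ms z : z \in sort leq s -> (z < n)%N by rewrite (perm_mem ps) !inE => /or3P[] /eqP->.
move: ps ms (size_sort leq s); case: (sort leq s) => [|a [|b [|c []]]] // ps ms _ /=.
case/andP=> ab /andP[bc _].
have [an bn cn] : [/\ (a < n)%N, (b < n)%N & (c < n)%N] by split; apply: ms; rewrite !inE eqxx ?orbT.
have abc : ((Ordinal an < Ordinal bn) && (Ordinal bn < Ordinal cn))%N by rewrite /= ab bc.
by exists (exist _ (Ordinal an, Ordinal bn, Ordinal cn) abc).
Qed.

Lemma card_rainbow n (cl : nat -> nat) a0 a1 (B : seq nat) :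
  cl a0 = 0%N -> cl a1 = 1%N -> (a0 < n)%N -> (a1 < n)%N -> uniq B ->
  (forall b, b \in B -> cl b = 2%N /\ (b < n)%N) -> (size B <= #|rainbow (n := n) cl|)%N.
Proof.
move=> c0 c1 a0n a1n uB HB.
pose colour2 (x : triple n) := head 0%N [seq e <- triple_leaves x | cl e == 2%N].
rewrite cardE -(size_map colour2); apply: uniq_leq_size => // b bB.
have [c2 bn] := HB b bB.
have U : uniq [:: a0; a1; b].
  have neq x y : cl x != cl y -> x != y by apply: contraNneq => ->.
  by rewrite /= !inE negb_or (neq a0 a1) ?(neq a0 b) ?(neq a1 b) ?c0 ?c1 ?c2.
have [x px] := exists_triple a0n a1n bn U.
apply/mapP; exists x.
  by rewrite mem_enum; apply: perm_trans (perm_map cl px) _; rewrite /= c0 c1 c2.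
rewrite /colour2; have := perm_filter (fun e => cl e == 2%N) px.
case: [seq e <- triple_leaves x | cl e == 2%N] => [|z [|z' s]]; rewrite /= c0 c1 c2 /= => P.
- by move/perm_size: P.
- by have := perm_mem P z; rewrite !inE eqxx => /esym /eqP.
- by move/perm_size: P.
Qed.

Definition spine_dist (R : realType) (h : R) (i j : nat) : R :=
  if (i == 0) || (j == 0) then 2 else 2 * h.

Lemma mean_excluded_colour0 (R : realType) n (t : wtree R) (cl : nat -> nat) (h : R) (x : triple n) :
  0 <= h ->
  (forall u w, (cl u < 3)%N -> (cl w < 3)%N -> cl u != cl w -> dist t u w = spine_dist h (cl u) (cl w)) ->
  rainbow cl x -> \sum_k qprob t x k * (cl (excluded x k) == 0%N)%:R = 1 / (h + 2).
Proof.
move=> h0 dcl; case: x => [[[a b] c] abc]; rewrite /rainbow /= => P.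
have cl3 z : z \in [:: cl a; cl b; cl c] -> (z < 3)%N by rewrite (perm_mem P) !inE => /or3P[] /eqP->.
have [ca cb cc] : [/\ cl a < 3, cl b < 3 & cl c < 3]%N by split; apply: cl3; rewrite !inE eqxx ?orbT.
have : uniq [:: cl a; cl b; cl c] by rewrite (perm_uniq P).
rewrite /= !inE andbT => /andP[/norP[nab nac] nbc].
rewrite !big_ord_recl big_ord0 /qprob /excluded /= !dcl //.
have h2 : h + 2 != 0 by rewrite gt_eqF //; lra.
move: nab nac nbc ca cb cc.
case: (cl a) => [|[|[|?]]] //; case: (cl b) => [|[|[|?]]] //; case: (cl c) => [|[|[|?]]] // *.
all: rewrite /spine_dist /=; field; rewrite ?h2 //= gt_eqF //; lra.
Qed.

Lemma exists_heavy_ge (R : realType) n (t : wtree R) l : (0 < l <= fidx n t)%N ->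
  exists2 i : 'I_(size (rpath t)), heavy n (nth t (rpath t) i) & (l <= i)%N.
Proof.
case/andP=> l0 lf; apply/exists_inP; apply: contraTT lf => /exists_inPn light.
suff : (fidx n t <= l.-1)%N by lia.
by apply/bigmax_leqP => i /light; rewrite -ltnNge; lia.
Qed.

Section SpineEstimates.
Variables (R : realType) (n : nat) (wl wr w0 : R) (L Rt : wtree R).
Hypotheses (lok : leaf_set_ok n (WNode wl L wr Rt)) (ordT : ordered (WNode wl L wr Rt))
  (hT : const_height (WNode wl L wr Rt) 1) (w0_gt0 : 0 < w0)
  (eT : edges_ge (WNode wl L wr Rt) w0).

Local Notation T := (WNode wl L wr Rt).
Local Notation v l := (nth T (rpath T) l).
Local Notation cl l := (spine_class (topo T) l).
Local Notation sel l := (rainbow (n := n) (cl l)).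

Lemma uniq_leavesT : uniq (leaves T).
Proof. by rewrite (perm_uniq lok) iota_uniq. Qed.

Lemma mem_leavesT a : (a \in leaves T) = (a < n)%N.
Proof. by rewrite (perm_mem lok) mem_iota. Qed.

Lemma NL_T : NL T = n.
Proof. by rewrite /NL (perm_size lok) size_iota. Qed.

Lemma hv_spine_bounds l : 0 <= hv (v l) <= 1.
Proof.
have [c ch c1] := const_height_rpath l (ltW w0_gt0) eT hT.
rewrite (hv_const ch) c1 andbT.
have [a al] := exists_leaf (v l).
rewrite -(rd_const ch al); exact: rd_ge0 (ltW w0_gt0) (edges_ge_rpath l eT).
Qed.

Lemma spine_heavy_node l : (0 < l <= fidx n T)%N ->
  exists wl' lv wr' rv, v l = WNode wl' lv wr' rv /\ n%:R / 12 <= (NL rv)%:R :> R.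
Proof.
move=> lf; have [i hi li] := exists_heavy_ge lf.
have lv_heavy : n%:R / 6 + 1 <= (NL (v l))%:R :> R.
  apply: le_trans (_ : (NL (v i))%:R <= _); first by move: hi; rewrite /heavy /alpha_heavy; lra.
  by rewrite ler_nat NL_rpath_mono // li ltn_ord.
have n1 : 1 <= n%:R :> R by rewrite ler1n -NL_T NL_gt0.
have := ordered_rpath l ordT; case E: (v l) lv_heavy => [a|wl' lv wr' rv].
  by rewrite /NL /=; lra.
rewrite NL_node natrD => heavy_lv /and3P[lr _ _]; exists wl', lv, wr', rv; split=> //.
by move: lr; rewrite -(ler_nat R); lra.
Qed.

Lemma spine_class_node l wl' lv wr' rv a : (l < size (rpath T))%N ->
  v l = WNode wl' lv wr' rv ->
  cl l a = if a \in leaves L then 0%N else if a \in leaves lv then 1%N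
           else if a \in leaves rv then 2%N else 3%N.
Proof. by move=> ls E; rewrite /spine_class brpath_topo (nth_map T) //; rewrite E /= !bleaves_topo. Qed.

Lemma leaves_spine_sub l : (0 < l < size (rpath T))%N -> {subset leaves (v l) <= leaves Rt}.
Proof.
case: l => // l /= ls a; rewrite (set_nth_default Rt) //; exact: leaves_rpath.
Qed.

Lemma card_sel_ge l : (0 < l <= fidx n T)%N -> (l < size (rpath T))%N ->
  n%:R / 12 <= #|sel l|%:R :> R.
Proof.
move=> lf ls; have [wl' [lv [wr' [rv [E rv_big]]]]] := spine_heavy_node lf.
apply: le_trans rv_big _; rewrite ler_nat.
have clE := spine_class_node _ ls E.
have sub : {subset leaves (WNode wl' lv wr' rv) <= leaves Rt}.
  by rewrite -E; apply: leaves_spine_sub; case/andP: lf => -> _.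
have notL z : z \in leaves Rt -> z \notin leaves L.
  by move=> zR; have := uniq_leavesT; rewrite /= cat_uniq => /and3P[_ /hasPn /(_ z zR)].
have uv := uniq_rpath l uniq_leavesT; rewrite E /= cat_uniq in uv.
case/and3P: uv => _ /hasPn lv_rv urv.
have [a0 a0L] := exists_leaf L.
have [a1 a1lv] := exists_leaf lv.
have a1R : a1 \in leaves Rt by apply: sub; rewrite /= mem_cat a1lv.
apply: (card_rainbow (a0 := a0) (a1 := a1)) => //.
- by rewrite clE a0L.
- by rewrite clE (negbTE (notL _ a1R)) a1lv.
- by rewrite -mem_leavesT /= mem_cat a0L.
- by rewrite -mem_leavesT /= mem_cat a1R orbT.
- move=> b brv; have bR : b \in leaves Rt by apply: sub; rewrite /= mem_cat brv orbT.
  rewrite -mem_leavesT /= mem_cat bR orbT clE (negbTE (notL _ bR)) brv.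
  by case: ifP => // blv; have := lv_rv b brv; rewrite blv.
Qed.

Lemma dist_spine_class l wl' lv wr' rv u w : (0 < l < size (rpath T))%N ->
  v l = WNode wl' lv wr' rv -> (cl l u < 3)%N -> (cl l w < 3)%N -> cl l u != cl l w ->
  dist T u w = spine_dist (hv (v l)) (cl l u) (cl l w).
Proof.
move=> l0s E; have /andP[_ ls] := l0s.
wlog lt_uw : u w / (cl l u < cl l w)%N => [gen cu cw|cu cw _].
  case: ltngtP => [lt|gt|->] _ //; first by apply: gen; rewrite ?ltn_eqF.
  by rewrite dist_sym /spine_dist orbC; apply: gen; rewrite ?ltn_eqF.
have sub := leaves_spine_sub l0s; rewrite E in sub.
have [c hc _] := const_height_rpath l (ltW w0_gt0) eT hT.
have uv := uniq_rpath l uniq_leavesT; rewrite E in hc uv *.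
move: cu cw lt_uw; rewrite !(spine_class_node _ ls E) (hv_const hc) /spine_dist.
case: ifP => uL; last case: ifP => ulv.
- case: ifP => // wL _ cw _; have wR : w \in leaves Rt.
    by move: cw; case: ifP => [wlv _|_]; [|case: ifP => // wrv _]; apply: sub;
      rewrite mem_cat ?wlv ?wrv ?orbT.
  by rewrite (dist_node_split uniq_leavesT hT uL wR) mulr1.
- case: ifP => wL //; case: ifP => wlv //; case: ifP => // wrv _ _ _.
  rewrite (@dist_rpath _ T l u w uniq_leavesT) E ?mem_cat ?ulv ?wrv ?orbT //.
  exact: dist_node_split.
- by case: ifP => // _ _; do 3 case: ifP => //.
Qed.

Local Notation p l := (1 / (hv (v l) + 2)).

Lemma mean_excludes_root l (x : triple n) : (0 < l <= fidx n T)%N -> (l < size (rpath T))%N ->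
  sel l x -> \sum_k qprob T x k * (excludes_root (topo T) l x k)%:R = p l.
Proof.
move=> lf ls; have [wl' [lv [wr' [rv [E _]]]]] := spine_heavy_node lf.
have /andP[hv0 _] := hv_spine_bounds l.
apply: mean_excluded_colour0 hv0 _ => u w; apply: dist_spine_class E.
by case/andP: lf => -> _.
Qed.

Lemma estimate_close l (o : outcomes n) (t : R) : (0 < l <= fidx n T)%N -> (l < size (rpath T))%N ->
  t <= 1/6 ->
  `|\sum_(x | sel l x) ((excludes_root (topo T) l x (o x))%:R - p l)| < #|sel l|%:R * t ->
  `|height_estimate R (topo T) o l - hv (v l)| <= 18 * t.
Proof.
move=> lf ls t6 dev; have m_ge := card_sel_ge lf ls.
have n1 : 1 <= n%:R :> R by rewrite ler1n -NL_T NL_gt0.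
have m0 : 0 < #|sel l|%:R :> R by lra.
have /andP[hv0 hv1] := hv_spine_bounds l.
rewrite /height_estimate; case: eqP => [l_eq0|_]; first by move: lf; rewrite l_eq0.
apply: (inv_sub2_near (p := p l)); rewrite ?hv0 ?hv1 //.
  by rewrite mul1r mulVf // gt_eqF //; lra.
rewrite /pair_freq; set S := \sum_(x | _) _; set m := #|_|%:R in m0 dev *.
have -> : S / m - p l = (S - m * p l) / m by rewrite mulrBl [m * _]mulrC mulfK // gt_eqF.
rewrite normrM normfV (gtr0_norm m0) ltr_pdivrMr // [t * m]mulrC.
have sum_p : \sum_(x | sel l x) p l = m * p l by rewrite sumr_const mulr_natl.
by rewrite sumrB sum_p in dev.
Qed.

Lemma deviation_prob l (t : R) : (0 < l <= fidx n T)%N -> (l < size (rpath T))%N -> 0 < t <= 2 ->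
  pr (qprob (n := n) T) (fun o => #|sel l|%:R * t
       <= `|\sum_(x | sel l x) ((excludes_root (topo T) l x (o x))%:R - p l)|)
  <= 2 * expR (- (n%:R / 12 * t ^+ 2 / 8)).
Proof.
move=> lf ls t02; have m_ge := card_sel_ge lf ls.
have qge0 (x : triple n) k : 0 <= qprob T x k := qprob_ge0 x k (ltW w0_gt0) eT.
have qsum1 x : \sum_k qprob T x k = 1 := qprob_sum1 x w0_gt0 eT lok.
have /andP[hv0 hv1] := hv_spine_bounds l.
have Y1 (x : triple n) k : `|(excludes_root (topo T) l x k)%:R - p l| <= 1.
  have [p13 p12] : 1/3 <= p l /\ p l <= 1/2.
    split; first by rewrite ler_pdivlMr ?mul1r; [rewrite ler_pdivrMl|]; lra.
    by rewrite ler_pdivrMr; lra.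
  by rewrite ler_norml; case: (excludes_root _ _ _ _) => /=; apply/andP; split; lra.
have Y0 x : sel l x -> \sum_k qprob T x k * ((excludes_root (topo T) l x k)%:R - p l) = 0.
  move=> sx; under eq_bigr do rewrite mulrBr.
  by rewrite sumrB -mulr_suml qsum1 mul1r mean_excludes_root // subrr.
apply: le_trans (hoeffding qge0 qsum1 Y1 Y0 t02) _.
rewrite ler_pM2l // ler_expR lerN2 ler_pM2r // ler_pM2r //.
by rewrite exprn_gt0 //; case/andP: t02.
Qed.

Lemma estimate_prob (t : R) : 0 < t <= 1/6 ->
  1 - (size (rpath T))%:R * (2 * expR (- (n%:R / 12 * t ^+ 2 / 8))) <=
  Prob T (fun o : outcomes n => [forall l : 'I_(size (rpath T)), (l <= fidx n T)%N ==>
    (`|height_estimate R (topo T) o l - hv (v l)| <= 18 * t)]).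
Proof.
move=> /andP[t0 t6].
have qge0 (x : triple n) k : 0 <= qprob T x k := qprob_ge0 x k (ltW w0_gt0) eT.
have qsum1 x : \sum_k qprob T x k = 1 := qprob_sum1 x w0_gt0 eT lok.
set good := fun o : outcomes n => _.
pose B (l : 'I_(size (rpath T))) (o : outcomes n) := (0 < l <= fidx n T)%N &&
  (#|sel l|%:R * t <= `|\sum_(x | sel l x) ((excludes_root (topo T) l x (o x))%:R - p l)|).
have cover o : ~~ good o -> exists l, B l o.
  move=> /forallPn[l]; rewrite negb_imply => /andP[lf far].
  have l0 : (0 < l)%N.
    rewrite lt0n; apply: contra far => /eqP l0.
    by rewrite l0 /height_estimate /= (hv_const hT) subrr normr0 mulr_ge0 //; lra.
  exists l; rewrite /B l0 lf /= leNgt; apply: contra far => dev.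
  by apply: estimate_close => //; rewrite ?l0 ?lf.
have bound l : pr (qprob T) (B l) <= 2 * expR (- (n%:R / 12 * t ^+ 2 / 8)).
  rewrite /B; case: (boolP (0 < l <= fidx n T)%N) => lf /=.
    by apply: deviation_prob; rewrite ?ltn_ord //; lra.
  by rewrite /pr big1 ?mulr_ge0 ?expR_ge0 // => o _; rewrite mulr0.
by have := pr_union_bound qge0 qsum1 cover bound; rewrite card_ord.
Qed.
End SpineEstimates.

Lemma sqrt_ln_div_small (R : realType) (x : R) : (2 * 84 ^+ 2) ^+ 2 <= x ->
  14 * Num.sqrt (ln x / x) <= 1/6.
Proof.
move=> xbig; have K1 : 1 <= 2 * 84 ^+ 2 :> R by rewrite expr2; lra.
have x1 : 1 <= x by apply: le_trans xbig; rewrite exprn_ege1.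
have x0 : 0 < x by lra.
have sx : 2 * 84 ^+ 2 <= Num.sqrt x by have := ler_wsqrtr xbig; rewrite sqrtr_sqr ger0_norm.
have s0 : 0 < Num.sqrt x by lra.
have lnx : ln x <= 2 * Num.sqrt x by apply: ln_le_2sqrt.
suff : Num.sqrt (ln x / x) <= Num.sqrt ((1 / 84) ^+ 2) by rewrite sqrtr_sqr ger0_norm //; lra.
apply: ler_wsqrtr; rewrite ler_pdivrMr // -[x in _ <= _ * x](sqr_sqrtr (ltW x0)).
apply: le_trans lnx _; rewrite !expr2 in sx *; nra.
Qed.

Lemma union_tail_le (R : realType) (x : R) : 1 < x ->
  x * (2 * expR (- (x / 12 * (14 * Num.sqrt (ln x / x)) ^+ 2 / 8))) <= 2 / x.
Proof.
move=> x1; have x0 : 0 < x by lra.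
have ln0 : 0 < ln x by rewrite ln_gt0.
have -> : x / 12 * (14 * Num.sqrt (ln x / x)) ^+ 2 / 8 = 196 / 96 * ln x.
  by rewrite exprMn sqr_sqrtr ?divr_ge0 ?ltW //; field; rewrite gt_eqF.
have : expR (- (196 / 96 * ln x)) <= expR (- (2%:R * ln x)) by rewrite ler_expR; lra.
rewrite expRN [in X in _ <= X -> _]expRM_natl lnK ?posrE // => e.
have -> : 2 / x = x * (2 * (x ^+ 2)^-1) by field; rewrite gt_eqF.
by rewrite ler_pM2l // ler_pM2l.
Qed.

Lemma eventually_small (R : realType) (eps : R) : 0 < eps -> exists N : nat, forall n : nat,
  (N <= n)%N -> let t := 14 * Num.sqrt (ln (n%:R : R) / n%:R) in
  [/\ 1 < n%:R :> R, 0 < t <= 1/6 & n%:R * (2 * expR (- (n%:R / 12 * t ^+ 2 / 8))) <= eps].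
Proof.
move=> eps0; set M : R := (2 * 84 ^+ 2) ^+ 2 + 2 / eps + 2.
have M0 : 0 <= M by rewrite /M !addr_ge0 ?sqr_ge0 ?divr_ge0 // ltW.
exists (Num.Def.archi_bound M) => n nN t.
have nM : M < n%:R by rewrite (lt_le_trans (archi_boundP M0)) // ler_nat.
have K0 := sqr_ge0 (2 * 84 ^+ 2 : R); have e0 : 0 < 2 / eps by rewrite divr_gt0.
have n_big : (2 * 84 ^+ 2) ^+ 2 <= n%:R :> R by rewrite /M in nM; lra.
have n_eps : 2 / eps < n%:R by rewrite /M in nM; lra.
have n1 : 1 < n%:R :> R by rewrite /M in nM; lra.
split; first exact: n1.
- rewrite (sqrt_ln_div_small n_big) andbT mulr_gt0 ?sqrtr_gt0 ?divr_gt0 ?ln_gt0 //; lra.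
- apply: le_trans (union_tail_le n1) _.
  by rewrite ler_pdivrMr; [rewrite mulrC -ler_pdivrMr //; lra | lra].
Qed.

Theorem lemma6 (R : realType) :
  exists (tau C : R), 0 < C /\
  exists A : forall n : nat, btree -> outcomes n -> nat -> R,
  forall eps : R, 0 < eps ->
  exists N : nat, forall (n : nat) (T : wtree R),
    (N <= n)%N ->
    leaf_set_ok n T ->
    ordered T ->
    all (fun x => x == 1) (rootdists T) ->
    edges_ge T (tau * ln (n%:R : R) / Num.sqrt (n%:R)) ->
    1 - eps <=
      Prob T (fun o : outcomes n =>
        [forall l : 'I_(size (rpath T)),
          (l <= fidx n T)%N ==>
          (`| A n (topo T) o l - hv (nth T (rpath T) l) |
             <= C * Num.sqrt (ln (n%:R : R) / n%:R))]).
Proof.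
exists 1, 252; split => //; exists (@height_estimate R) => eps eps0.
have [N small] := eventually_small eps0; exists N => n [a|wl L wr Rt] nN lok ordT hT eT.
  by rewrite /= andbT eq_sym oner_eq0 in hT.
have [n1 t_bd tail] := small n nN; set s := Num.sqrt _ in t_bd tail *.
have w0 : 0 < 1 * ln n%:R / Num.sqrt n%:R :> R by rewrite mul1r divr_gt0 ?ln_gt0 ?sqrtr_gt0 //; lra.
have -> : 252 * s = 18 * (14 * s) by ring.
apply: le_trans (estimate_prob lok ordT hT w0 eT t_bd); rewrite lerD2l lerN2.
apply: le_trans tail; rewrite ler_wpM2r ?mulr_ge0 ?expR_ge0 // ler_nat.
by rewrite -(NL_T lok) size_rpath_le.
Qed.
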